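(* Let $\tau(t)$ be a tau function of the KP hierarchy, $n\ge1$, and $\alpha_1,\dots,\alpha_n$ nonzero distinct complex numbers. Put $f(t,\alpha,\beta)=\frac{\tau(t+[\beta]-[\alpha])}{\beta-\alpha}$ and, for $|\beta|<|\alpha|$, expand $f(t,\alpha,\beta)=\sum_{j\ge0}f_j(t,\alpha)\beta^j$. Let $D=\det\big(f(t,\alpha_j,\beta_i)\big)_{1\le i,j\le n}$ and $F=D/\prod_{1\le i<j\le n}(\beta_j-\beta_i)$, which extends holomorphically to $\beta_i=0$. Define $F_0=F$ and $F_k=F_{k-1}|_{\beta_k=0}$ for $1\le k\le n$. Let $\mathcal B_k=\prod_{k\le i<j\le n}(\beta_j-\beta_i)$ for $1\le k\le n-1$ and $\mathcal B_n=\mathcal B_{n+1}=1$. Then for $1\le k\le n$, $$F_k=\frac{D_k}{\mathcal B_{k+1}\prod_{j=k+1}^n\beta_j^k},$$ where $D_k$ is the $n\times n$ determinant whose $(i,j)$ entry is $f_{i-1}(t,\alpha_j)$ for $1\le i\le k$ and $f(t,\alpha_j,\beta_i)$ for $k+1\le i\le n$ (the empty product for $k=n$ being $1$). In particular $F_n=\det\big(f_{i-1}(t,\alpha_j)\big)_{1\le i,j\le n}$.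
   Context: Let $t=(t_1,t_2,t_3,\dots)$ be infinitely many variables. For a complex number $z$ put $[z]=(z,z^2/2,z^3/3,\dots)$ and $\eta(t,z)=\sum_{j\ge1}t_jz^j$. A tau function of the KP hierarchy is a nonzero function $\tau(t)$ satisfying the bilinear identity $\mathrm{res}_{z=0}\,\tau(t-s-[z])\tau(t+s+[z])e^{-2\eta(s,z^{-1})}\frac{dz}{z^2}=0$ for all $s=(s_1,s_2,\dots)$. *)

From HB Require Import structures.
From mathcomp Require Import all_boot all_order all_algebra.
From mathcomp Require Import all_classical all_reals all_analysis.
From mathcomp Require Import complex.
Set Implicit Arguments. Unset Strict Implicit. Unset Printing Implicit Defensive.
Import Order.TTheory GRing.Theory Num.Theory.
Import numFieldTopology.Exports numFieldNormedType.Exports.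
Local Open Scope ring_scope.
Local Open Scope classical_set_scope.

Section KPDefs.
Variable R : realType.
Local Notation C := (complex R).

HB.instance Definition _ := NormedModule.copy C C^o.

(* Times t = (t_1, t_2, ...) are encoded as [t : nat -> C] with t_{j+1} = t j. *)

Definition bracket (z : C) : nat -> C := fun j => z ^+ j.+1 / j.+1%:R.

(* eta(s, w) = sum_{j>=1} s_j w^j, for s supported on the first N times *)
Definition eta (N : nat) (s : nat -> C) (w : C) : C :=
  \sum_(i < N) s i * w ^+ i.+1.

Definition expC (z : C) : C := limn (series (fun n => z ^+ n / n`!%:R)).

(* [has_residue0 g c]: g has a Laurent expansion
   g z = sum_{m>=0} a_m z^m + sum_{m>=0} b_m z^{-(m+1)} on a punctured disk
   0 < |z| < r, and its residue at 0 (the coefficient b_0 of z^{-1}) is c. *)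
Definition has_residue0 (g : C -> C) (c : C) : Prop :=
  exists r : C, 0 < r /\
  exists a b : nat -> C,
    (forall z : C, 0 < `|z| < r ->
       exists A B : C,
         series (fun m => a m * z ^+ m) @ \oo --> A /\
         series (fun m => b m * z ^- m.+1) @ \oo --> B /\
         g z = A + B)
    /\ b 0%N = c.

(* tau is a (nonzero) tau function of the KP hierarchy: the bilinear identity
   res_{z=0} tau(t-s-[z]) tau(t+s+[z]) e^{-2 eta(s,1/z)} dz/z^2 = 0
   holds for all t and all s (s with finitely many nonzero times, so that
   eta(s, 1/z) is meaningful). *)
Definition KP_tau (tau : (nat -> C) -> C) : Prop :=
  (exists t, tau t != 0) /\
  forall (t s : nat -> C) (N : nat), (forall i, (N <= i)%N -> s i = 0) ->
    has_residue0
      (fun z => tau (fun j => t j - s j - bracket z j)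
              * tau (fun j => t j + s j + bracket z j)
              * expC (- 2 * eta N s z^-1) / z ^+ 2) 0.

Definition fKP (tau : (nat -> C) -> C) (t : nat -> C) (a b : C) : C :=
  tau (fun j => t j + bracket b j - bracket a j) / (b - a).

Variables (n : nat) (tau : (nat -> C) -> C) (t : nat -> C) (alpha : 'I_n -> C).

Definition Ddet (beta : 'I_n -> C) : C :=
  \det (\matrix_(i < n, j < n) fKP tau t (alpha j) (beta i)).

Definition Ffun (beta : 'I_n -> C) : C :=
  Ddet beta / \prod_(i < n) \prod_(j < n | (i < j)%N) (beta j - beta i).

Definition upd (beta : 'I_n -> C) (k : nat) (z : C) : 'I_n -> C :=
  fun i => if val i == k then z else beta i.

(* F_0 = F, F_k = F_{k-1}|_{beta_k = 0} (value at 0 of the extension,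
   i.e. the limit beta_k -> 0); in 0-based indexing beta_k is [beta (k-1)]. *)
Fixpoint Fk (k : nat) (beta : 'I_n -> C) : C :=
  match k with
  | 0 => Ffun beta
  | k'.+1 => lim (Fk k' (upd beta k' z) @[z --> 0^'])
  end.

Definition Dk (fj : C -> nat -> C) (k : nat) (beta : 'I_n -> C) : C :=
  \det (\matrix_(i < n, j < n)
          if (i < k)%N then fj (alpha j) i else fKP tau t (alpha j) (beta i)).

(* B_{k+1} = prod_{k+1 <= i < j <= n} (beta_j - beta_i)  (1-based) *)
Definition Bk1 (k : nat) (beta : 'I_n -> C) : C :=
  \prod_(i < n | (k <= i)%N) \prod_(j < n | (i < j)%N) (beta j - beta i).

End KPDefs.

From HB Require Import structures.
From mathcomp Require Import all_boot all_order all_algebra.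
From mathcomp Require Import all_classical all_reals all_analysis.
From mathcomp Require Import complex.
From mathcomp Require Import ring.
Import Order.TTheory GRing.Theory Num.Theory.
Import numFieldTopology.Exports numFieldNormedType.Exports.
Set Implicit Arguments. Unset Strict Implicit. Unset Printing Implicit Defensive.
Local Open Scope ring_scope.
Local Open Scope classical_set_scope.

(* With beta_k = z and the other beta's fixed, F_(k-1) is
   D_(k-1)(z) / (B_k prod_(j>=k) beta_j^(k-1)).  Expanding D_(k-1) along row k
   and writing f(alpha_j, z) = sum_(m<k-1) f_m(alpha_j) z^m + z^(k-1) g_j(z),
   the first k-1 terms are the rows above row k and contribute nothing, so
   z^(k-1) factors out of D_(k-1)(z) and cancels against beta_k^(k-1) in the
   denominator.  Since g_j(z) -> f_(k-1)(alpha_j) as z -> 0, the limit is D_k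
   divided by B_(k+1) prod_(j>k) beta_j^k. *)

Section PowerSeries.
Variable K : numFieldType.

Lemma sum_geometric_le (q : K) (L N : nat) : 0 <= q -> q * 2 <= 1 ->
  \sum_(L <= m < N) q ^+ m <= 2 * q ^+ L.
Proof.
move=> q0 q2.
have tail M : \sum_(L <= m < L + M) q ^+ m + 2 * q ^+ (L + M) <= 2 * q ^+ L.
  elim: M => [|M IH]; first by rewrite addn0 big_geq // add0r.
  rewrite addnS big_nat_recr ?leq_addr //= (le_trans _ IH) // -addrA lerD2l.
  have qx := exprn_ge0 (L + M) q0; set x := q ^+ (L + M) in qx *.
  rewrite exprS (_ : x + 2 * (q * x) = x + x * (q * 2)); last by ring.
  rewrite (_ : 2 * x = x + x); last by ring.
  by rewrite lerD2l; have := ler_wpM2l qx q2; rewrite mulr1.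
have [LN|NL] := leqP L N; last first.
  by rewrite big_geq; [rewrite mulr_ge0 ?exprn_ge0 ?ler0n | exact: ltnW].
rewrite -(subnKC LN); apply: le_trans _ (tail (N - L)%N); rewrite lerDl.
by rewrite mulr_ge0 ?exprn_ge0 ?ler0n.
Qed.

Lemma powser_tail_le (a : nat -> K) (rho M z : K) (k N : nat) :
  0 < rho -> (forall m, `|a m * rho ^+ m| <= M) -> `|z| * 2 <= rho ->
  `|\sum_(k <= m < N) a m * z ^+ m| <= 2 * M / rho ^+ k * `|z| ^+ k.
Proof.
move=> rho0 HM z2; pose q := `|z| / rho.
have q0 : 0 <= q by rewrite divr_ge0 // ltW.
have q2 : q * 2 <= 1 by rewrite mulrAC ler_pdivrMr // mul1r.
apply: (le_trans (ler_norm_sum _ _ _)).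
apply: (@le_trans _ _ (\sum_(k <= m < N) M * q ^+ m)).
  apply: ler_sum => m _.
  rewrite (_ : `|a m * z ^+ m| = `|a m * rho ^+ m| * q ^+ m).
    by rewrite ler_wpM2r ?exprn_ge0.
  rewrite !normrM !normrX (gtr0_norm rho0) /q expr_div_n -mulrA.
  by rewrite [rho ^+ m * _]mulrC divfK // expf_neq0 ?gt_eqF.
have M0 : 0 <= M by apply: le_trans (HM 0%N).
rewrite -mulr_sumr (_ : _ * `|z| ^+ k = M * (2 * q ^+ k)).
  by rewrite ler_wpM2l // sum_geometric_le.
by rewrite /q expr_div_n; field; rewrite expf_neq0 ?gt_eqF.
Qed.

Lemma cvg_powser_remainder (a : nat -> K) (S : K -> K) (r : K) : 0 < r ->
  (forall b, `|b| < r -> series (fun m => a m * b ^+ m) @ \oo --> S b) ->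
  forall k, (S z - \sum_(m < k) a m * z ^+ m) / z ^+ k @[z --> 0^'] --> a k.
Proof.
move=> r0 HS k; pose rho := r / 2.
have rho0 : 0 < rho by rewrite divr_gt0.
have rhor : rho < r by rewrite ltr_pdivrMr // ltr_pMr // ltr1n.
(* Cauchy estimate: the terms at radius rho = r/2 are bounded by some M. *)
have [M M0 HM] : exists2 M, 0 < M & forall m, `|a m * rho ^+ m| <= M.
  have u0 : (fun m => a m * rho ^+ m) @ \oo --> 0.
    by apply: cvg_series_cvg_0; apply: cvgP (HS rho _); rewrite gtr0_norm.
  have [M [Mreal HM]] := cvg_seq_bounded (cvgP _ u0).
  exists (`|M| + 1); first by rewrite ltr_pwDr.
  move=> m; apply: HM => //; first by rewrite ltr_pwDr // real_ler_norm.
pose C0 := 2 * M / rho ^+ k.+1.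
have C0_gt0 : 0 < C0 by rewrite !divr_gt0 ?mulr_gt0 ?exprn_gt0.
apply/cvgrPdist_le => e e0; near=> z.
have z0 : z != 0 by near: z; exact: nbhs_dnbhs_neq.
have zk : 0 < `|z| ^+ k by rewrite exprn_gt0 ?normr_gt0.
have z2 : `|z| * 2 <= rho.
  rewrite -ler_pdivlMr //; near: z; apply: nbhs_dnbhs.
  by apply: (@nbhs0_le K K); rewrite divr_gt0.
have zC : C0 * `|z| <= e / 2.
  rewrite mulrC -ler_pdivlMr //; near: z; apply: nbhs_dnbhs.
  by apply: (@nbhs0_le K K); rewrite divr_gt0 // divr_gt0.
have e2 : 0 < `|z| ^+ k * (e / 2) by rewrite mulr_gt0 ?divr_gt0.
have zr : `|z| < r.
  apply: le_lt_trans rhor; apply: le_trans z2.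
  by rewrite ler_pMr ?normr_gt0 // ler1n.
have /cvgrPdist_le /(_ _ e2) HN := HS z zr.
have [N [HSN kN]] := filter_ex (filterI HN (nbhs_infty_ge k.+1)).
have tail := @powser_tail_le a rho M z k.+1 N rho0 HM z2.
have -> : a k - (S z - \sum_(m < k) a m * z ^+ m) / z ^+ k =
          - ((S z - \sum_(m < k.+1) a m * z ^+ m) / z ^+ k).
  by rewrite big_ord_recr /=; field; rewrite expf_neq0.
have -> : S z - \sum_(m < k.+1) a m * z ^+ m =
          (S z - series (fun m => a m * z ^+ m) N) +
          \sum_(k.+1 <= m < N) a m * z ^+ m.
  by rewrite /series /= (big_cat_nat (leq0n k.+1) kN) big_mkord /=; ring.
rewrite normrN normrM normfV normrX ler_pdivrMr // mulrC.
apply: le_trans (ler_normD _ _) _; rewrite [e]splitr mulrDr lerD //.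
apply: le_trans tail _; rewrite -/C0 exprSr mulrCA ler_wpM2l // ltW.
Unshelve. all: by end_near. Qed.
End PowerSeries.

Section RowReplacement.
Variables (F : comPzRingType) (n : nat).

Definition set_row (A : 'M[F]_n) (i0 : 'I_n) (v : 'I_n -> F) : 'M[F]_n :=
  \matrix_(i, j) if i == i0 then v j else A i j.

Lemma det_set_row (A : 'M[F]_n) (i0 : 'I_n) (v : 'I_n -> F) :
  \det (set_row A i0 v) = \sum_j v j * cofactor A i0 j.
Proof.
rewrite (expand_det_row _ i0); apply: eq_bigr => j _.
rewrite mxE eqxx; congr (_ * (_ * \det _)); apply/matrixP => a b.
by rewrite !mxE eq_sym (negbTE (neq_lift i0 a)).
Qed.

Lemma cofactor_row_orthogonal (A : 'M[F]_n) (i0 m : 'I_n) :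
  m != i0 -> \sum_j A m j * cofactor A i0 j = 0.
Proof.
move=> mi0; have /matrixP/(_ m i0) := mul_mx_adj A.
rewrite !mxE (negbTE mi0) mulr0n => adjE.
by rewrite -[RHS]adjE; apply: eq_bigr => j _; rewrite mxE.
Qed.

End RowReplacement.

Section DistinctTail.
Variables (R : realType) (n : nat).
Local Notation C := (complex R).

Definition distinct_nonzero_from (k : nat) (beta : 'I_n -> C) : Prop :=
  (forall i : 'I_n, (k <= i)%N -> beta i != 0) /\
  (forall i j : 'I_n, (k <= i)%N -> (k <= j)%N -> beta i = beta j -> i = j).

Lemma leq_neq_ord (k0 i : 'I_n) : ((k0 <= i)%N && (i != k0)) = (k0 < i)%N.
Proof. by rewrite ltn_neqAle -(inj_eq val_inj) eq_sym andbC. Qed.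

Lemma Bk1_upd (k0 : 'I_n) (beta : 'I_n -> C) (z : C) :
  Bk1 k0 (upd beta k0 z) =
  \prod_(j < n | (k0 < j)%N) (beta j - z) * Bk1 k0.+1 beta.
Proof.
rewrite /Bk1 (bigD1 k0) //=; congr (_ * _).
  by apply: eq_bigr => j kj; rewrite /upd eqxx (gtn_eqF kj).
apply: eq_big => i; first exact: leq_neq_ord.
rewrite leq_neq_ord => ki; apply: eq_bigr => j ij.
by rewrite /upd (gtn_eqF ki) (gtn_eqF (ltn_trans ki ij)).
Qed.

Lemma prod_upd_exp (k0 : 'I_n) (beta : 'I_n -> C) (z : C) :
  \prod_(j < n | (k0 <= j)%N) upd beta k0 z j ^+ k0 =
    z ^+ k0 * \prod_(j < n | (k0 < j)%N) beta j ^+ k0.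
Proof.
rewrite (bigD1 k0) //=; congr (_ * _); first by rewrite /upd eqxx.
apply: eq_big => i; first exact: leq_neq_ord.
by rewrite leq_neq_ord => ki; rewrite /upd (gtn_eqF ki).
Qed.

Lemma Bk1_neq0 k (beta : 'I_n -> C) :
  distinct_nonzero_from k beta -> Bk1 k beta != 0.
Proof.
move=> [_ binj]; rewrite prodf_seq_neq0; apply/allP => i _; apply/implyP => ki.
rewrite prodf_seq_neq0; apply/allP => j _; apply/implyP => ij.
rewrite subr_eq0; apply/eqP => /(binj j i (leq_trans ki (ltnW ij)) ki) ji.
by move: ij; rewrite ji ltnn.
Qed.

Lemma near_upd_distinct_nonzero (k0 : 'I_n) (beta : 'I_n -> C) :
  distinct_nonzero_from k0.+1 beta ->
  \forall z \near 0^', distinct_nonzero_from k0 (upd beta k0 z).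
Proof.
move=> [bnz binj].
have zb : \forall z \near 0^', forall i : 'I_n, (k0 < i)%N -> z != beta i.
  apply: filter_forall => i; have [ki|_] := ltnP k0 i; last by near=> z.
  have bi0 : 0 < `|beta i| by rewrite normr_gt0 bnz.
  apply: nbhs_dnbhs; apply: (filterS _ (nbhs0_lt bi0)) => z zl _.
  by apply/eqP => zbi; move: zl; rewrite zbi ltxx.
near=> z.
have z0 : z != 0 by near: z; exact: nbhs_dnbhs_neq.
have zb_z : forall i : 'I_n, (k0 < i)%N -> z != beta i by near: z; exact: zb.
have ltk0 (l : 'I_n) : (k0 <= l)%N -> val l != k0 -> (k0 < l)%N.
  by move=> kl lk; rewrite ltn_neqAle eq_sym lk kl.
split=> [i ki|i j ki kj]; rewrite /upd.
  by case: ifP => [//|/negbT ik]; apply: bnz; exact: ltk0.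
case: eqP => [ik|/eqP ik]; case: eqP => [jk|/eqP jk].
- by move=> _; apply: val_inj; rewrite ik jk.
- by move=> zj; move: (zb_z j (ltk0 j kj jk)); rewrite zj eqxx.
- by move=> iz; move: (zb_z i (ltk0 i ki ik)); rewrite iz eqxx.
- by apply: binj; exact: ltk0.
Unshelve. all: by end_near. Qed.

End DistinctTail.

Section KP.
Variables (R : realType) (n : nat) (tau : (nat -> complex R) -> complex R).
Variables (t : nat -> complex R) (alpha : 'I_n -> complex R).
Variable fj : complex R -> nat -> complex R.
Local Notation C := (complex R).
Local Notation f := (fKP tau t).

Definition Dk_mx (k : nat) (beta : 'I_n -> C) : 'M[C]_n :=
  \matrix_(i, j) if (i < k)%N then fj (alpha j) i else f (alpha j) (beta i).

Lemma Dk_mx_upd (k0 : 'I_n) beta z :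
  Dk_mx k0 (upd beta k0 z) = set_row (Dk_mx k0 beta) k0 (fun j => f (alpha j) z).
Proof.
apply/matrixP => i j; rewrite !mxE /upd -(inj_eq val_inj).
by case: eqP => [->|_]; rewrite ?ltnn.
Qed.

Lemma Dk_mx_succ (k0 : 'I_n) beta :
  Dk_mx k0.+1 beta = set_row (Dk_mx k0 beta) k0 (fun j => fj (alpha j) k0).
Proof.
apply/matrixP => i j; rewrite !mxE ltnS leq_eqVlt -(inj_eq val_inj).
by case: eqP => [->|].
Qed.

Lemma Dk_mx_cofactor_orthogonal (k0 : 'I_n) beta (m : nat) : (m < k0)%N ->
  \sum_j fj (alpha j) m * cofactor (Dk_mx k0 beta) k0 j = 0.
Proof.
move=> mk; have mn : (m < n)%N := ltn_trans mk (ltn_ord k0).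
have mk0 : Ordinal mn != k0 by rewrite -(inj_eq val_inj) /= ltn_eqF.
rewrite -[RHS](cofactor_row_orthogonal (Dk_mx k0 beta) mk0).
by apply: eq_bigr => j _; rewrite mxE mk.
Qed.

Definition fKP_remainder (j : 'I_n) (k : nat) (z : C) : C :=
  (f (alpha j) z - \sum_(m < k) fj (alpha j) m * z ^+ m) / z ^+ k.

Lemma Dk_upd (k0 : 'I_n) beta z : z != 0 ->
  Dk tau t alpha fj k0 (upd beta k0 z) =
    z ^+ k0 * \sum_j fKP_remainder j k0 z * cofactor (Dk_mx k0 beta) k0 j.
Proof.
move=> z0; rewrite [LHS]/Dk -/(Dk_mx _ _) Dk_mx_upd det_set_row.
have fE j : f (alpha j) z =
    z ^+ k0 * fKP_remainder j k0 z + \sum_(m < k0) z ^+ m * fj (alpha j) m.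
  rewrite /fKP_remainder mulrC divfK ?expf_neq0 //.
  by under [X in _ = _ + X]eq_bigr do rewrite mulrC; rewrite subrK.
under eq_bigr do rewrite fE mulrDl mulr_suml -mulrA.
rewrite big_split /= -mulr_sumr exchange_big /= [X in _ + X]big1 ?addr0 //.
move=> m _; under eq_bigr do rewrite -mulrA.
by rewrite -mulr_sumr Dk_mx_cofactor_orthogonal ?mulr0.
Qed.

Lemma Dk_succ (k0 : 'I_n) beta :
  Dk tau t alpha fj k0.+1 beta =
    \sum_j fj (alpha j) k0 * cofactor (Dk_mx k0 beta) k0 j.
Proof. by rewrite [LHS]/Dk -/(Dk_mx _ _) Dk_mx_succ det_set_row. Qed.

Hypothesis alpha_neq0 : forall j, alpha j != 0.
Hypothesis f_expansion : forall (j : 'I_n) (b : C), `|b| < `|alpha j| ->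
  series (fun m => fj (alpha j) m * b ^+ m) @ \oo --> f (alpha j) b.

Definition Fk_closed_form (k : nat) (beta : 'I_n -> C) : C :=
  Dk tau t alpha fj k beta /
    (Bk1 k beta * \prod_(j < n | (k <= j)%N) beta j ^+ k).

Lemma cvg_fKP_remainder (j : 'I_n) (k : nat) :
  fKP_remainder j k z @[z --> 0^'] --> fj (alpha j) k.
Proof.
have alpha_gt0 : 0 < `|alpha j| by rewrite normr_gt0.
exact: (cvg_powser_remainder alpha_gt0 (@f_expansion j)).
Qed.

Lemma Fk0 (beta : 'I_n -> C) : Fk tau t alpha 0 beta = Fk_closed_form 0 beta.
Proof.
rewrite /= /Ffun /Ddet /Fk_closed_form /Dk /Bk1; congr (_ / _).
rewrite [X in _ * X]big1 ?mulr1 => [|j _]; last by rewrite expr0.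
by apply: eq_bigl.
Qed.

Lemma Fk_succ (k0 : 'I_n) (beta : 'I_n -> C) :
  (forall beta', distinct_nonzero_from k0 beta' ->
     Fk tau t alpha k0 beta' = Fk_closed_form k0 beta') ->
  distinct_nonzero_from k0.+1 beta ->
  Fk tau t alpha k0.+1 beta = Fk_closed_form k0.+1 beta.
Proof.
move=> IH hbeta; have [bnz _] := hbeta.
set cof := cofactor (Dk_mx k0 beta) k0.
pose P z := \prod_(j < n | (k0 < j)%N) (beta j - z).
set B := Bk1 k0.+1 beta; set Q := \prod_(j < n | (k0 < j)%N) beta j ^+ k0.
pose X z := \sum_j fKP_remainder j k0 z * cof j.
have Bnz : B != 0 by exact: Bk1_neq0.
have Qnz : Q != 0.
  rewrite prodf_seq_neq0; apply/allP => i _; apply/implyP => ki.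
  by rewrite expf_neq0 ?bnz.
have P0nz : P 0 != 0.
  rewrite prodf_seq_neq0; apply/allP => i _; apply/implyP => ki.
  by rewrite subr0 bnz.
have Fk_updE : \forall z \near 0^',
    X z / (P z * B * Q) = Fk tau t alpha k0 (upd beta k0 z).
  near=> z; have z0 : z != 0 by near: z; exact: nbhs_dnbhs_neq.
  rewrite IH; last by near: z; exact: near_upd_distinct_nonzero.
  rewrite /Fk_closed_form Dk_upd // Bk1_upd prod_upd_exp.
  rewrite -/B -/Q -/(P z) -/cof -/(X z).
  by rewrite [P z * B * (_ * Q)]mulrCA -[RHS]mulf_div divff ?mul1r ?expf_neq0.
have cvgX : X z / (P z * B * Q) @[z --> 0^'] -->
    (\sum_j fj (alpha j) k0 * cof j) / (P 0 * B * Q).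
  apply: cvgM.
    apply: cvg_big => [|j _]; first exact: add_continuous.
    by apply: cvgM; [exact: cvg_fKP_remainder | exact: cvg_cst].
  apply: cvgV; first by rewrite !mulf_neq0.
  apply: cvgM; last exact: cvg_cst; apply: cvgM; last exact: cvg_cst.
  apply: cvg_big => [|j _]; first exact: mul_continuous.
  by apply: cvgB; [exact: cvg_cst | exact: nbhs_dnbhs].
rewrite /= (cvg_lim _ (cvg_trans (near_eq_cvg Fk_updE) cvgX)); last first.
  exact: norm_hausdorff.
rewrite /Fk_closed_form Dk_succ -/cof.
have -> : \prod_(j < n | (k0 < j)%N) beta j ^+ k0.+1 = Q * P 0.
  by rewrite -big_split; apply: eq_bigr => j _; rewrite exprSr subr0.
by rewrite mulrA [_ * P 0]mulrC !mulrA.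
Unshelve. all: by end_near. Qed.

Lemma Fk_eq_closed_form (k : nat) : (k <= n)%N ->
  forall beta, distinct_nonzero_from k beta ->
  Fk tau t alpha k beta = Fk_closed_form k beta.
Proof.
elim: k => [_ beta _|k IH kn beta]; first exact: Fk0.
exact: (Fk_succ (k0 := Ordinal kn) (IH (ltnW kn))).
Qed.

End KP.

Theorem mainTheorem5 (R : realType) (tau : (nat -> complex R) -> complex R)
  (n : nat) (alpha : 'I_n -> complex R) (t : nat -> complex R)
  (fj : complex R -> nat -> complex R) :
  KP_tau tau ->
  (1 <= n)%N ->
  (forall j, alpha j != 0) ->
  injective alpha ->
  (forall (j : 'I_n) (b : complex R), `|b| < `|alpha j| ->
     series (fun m => fj (alpha j) m * b ^+ m) @ \oo --> fKP tau t (alpha j) b) ->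
  forall k : nat, (1 <= k <= n)%N ->
  forall beta : 'I_n -> complex R,
    (forall i : 'I_n, (k <= i)%N -> beta i != 0) ->
    (forall i j : 'I_n, (k <= i)%N -> (k <= j)%N -> beta i = beta j -> i = j) ->
    Fk tau t alpha k beta =
      Dk tau t alpha fj k beta /
        (Bk1 k beta * \prod_(j < n | (k <= j)%N) beta j ^+ k).
Proof.
move=> _ _ alpha_neq0 _ f_expansion k /andP[_ kn] beta bnz binj.
exact: (Fk_eq_closed_form alpha_neq0 f_expansion kn (conj bnz binj)).
Qed.
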